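(* Let $m\geq 1$ be an integer and let $G$ be a connected graph with $n$ vertices and $n-1+m$ edges. Then the minor-3-core of $G$ has at most $2(m-1)$ vertices.
   Context: Graphs are simple and undirected. A minor of $G$ is a graph obtained from $G$ by vertex contractions (contracting a vertex $u$ into a neighbour $v$, i.e. an edge contraction keeping the name $v$) and subgraph operations. A minor-3-core of $G$ is a minor $H$ of $G$ with minimum degree at least $3$ such that no minor of $G$ with minimum degree at least $3$ has more edges than $H$; all minor-3-cores of $G$ are isomorphic, so one speaks of the minor-3-core. Equivalently, it is the graph obtained by repeatedly contracting a vertex of degree at most $2$ into a neighbour and deleting isolated vertices until neither operation applies. *)

From mathcomp Require Import all_boot.
Set Implicit Arguments. Unset Strict Implicit. Unset Printing Implicit Defensive.

(* A (finite, simple, undirected) graph whose vertices are named by elements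
   of a finite type T: a vertex set and a set of edges, each edge being a
   2-element subset of the vertex set (see [wf_graph]). Minors of a graph on T
   are again graphs on T, since a vertex contraction keeps the name of the
   vertex contracted into. *)
Record graph (T : finType) := Graph { gV : {set T}; gE : {set {set T}} }.

Section Graphs.
Variable T : finType.
Implicit Types (G H : graph T) (u v w : T).

Definition wf_graph G : Prop :=
  forall e, e \in gE G ->
    exists x y, [/\ x != y, x \in gV G, y \in gV G & e = [set x; y]].

Definition adj G : rel T := fun x y => [set x; y] \in gE G.

Definition connected_graph G : Prop :=
  forall x y, x \in gV G -> y \in gV G -> connect (adj G) x y.

Definition deg G v : nat := #|[set e in gE G | v \in e]|.

Definition mindeg3 G : Prop := forall v, v \in gV G -> 3 <= deg G v.

Definition del_edge G (e : {set T}) : graph T := Graph (gV G) (gE G :\ e).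
Definition del_vertex G v : graph T :=
  Graph (gV G :\ v) [set e in gE G | v \notin e].

(* contract vertex u into its neighbour v (edge contraction keeping name v);
   parallel edges are merged since edges form a set *)
Definition contract G u v : graph T :=
  Graph (gV G :\ u)
        ([set e in gE G | u \notin e] :|:
         [set [set w; v] | w in [set w in gV G | adj G u w && (w != v)]]).

Inductive minor (G : graph T) : graph T -> Prop :=
| minor_refl : minor G G
| minor_del_edge H e : minor G H -> e \in gE H -> minor G (del_edge H e)
| minor_del_vertex H v : minor G H -> v \in gV H -> minor G (del_vertex H v)
| minor_contract H u v : minor G H -> u != v -> adj H u v ->
    minor G (contract H u v).

Definition minor3core G H : Prop :=
  [/\ minor G H, mindeg3 H &
      forall H', minor G H' -> mindeg3 H' -> #|gE H'| <= #|gE H| ].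
End Graphs.

From mathcomp Require Import all_boot.
From mathcomp Require Import zify.

(* The circuit rank |E| - |V| + c (c the number of components) does not
   increase under deleting an edge, deleting a vertex or contracting an edge,
   so every nonempty minor H of G satisfies |E(H)| - |V(H)| + 1 <= m.  If H
   has minimum degree 3 then also 3|V(H)| <= 2|E(H)|, whence
   |V(H)| <= 2(m - 1). *)

Set Implicit Arguments.
Unset Strict Implicit.
Unset Printing Implicit Defensive.

Section Graphs.
Variable T : finType.
Implicit Types (G H : graph T) (u v w x y : T).

Lemma set2_inj u : injective (fun v => [set u; v]).
Proof.
move=> v w eq_uv_uw.
have /set2P[vu|//] : v \in [set u; w] by rewrite -eq_uv_uw set22.
have /set2P[wu|//] : w \in [set u; v] by rewrite eq_uv_uw set22.
by rewrite vu wu.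
Qed.

Lemma adj_sym G x y : adj G x y = adj G y x.
Proof. by rewrite /adj setUC. Qed.

Lemma wf_adj G x y : wf_graph G -> adj G x y ->
  [/\ x \in gV G, y \in gV G & x != y].
Proof.
move=> wfG /wfG[a [b [ab aV bV exy]]].
have inV z : z \in [set a; b] -> z \in gV G by case/set2P=> ->.
split; first by rewrite inV // -exy set21.
  by rewrite inV // -exy set22.
apply: contraNneq ab => eq_xy; move: (set21 a b) (set22 a b).
by rewrite -exy eq_xy setUid !inE => /eqP-> /eqP->.
Qed.

Lemma wf_del_edge G e : wf_graph G -> wf_graph (del_edge G e).
Proof. by move=> wfG f /setD1P[_ /wfG]. Qed.

Lemma wf_edge_avoiding G v e : wf_graph G -> e \in gE G -> v \notin e ->
  exists x y, [/\ x != y, x \in gV G :\ v, y \in gV G :\ v & e = [set x; y]].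
Proof.
move=> wfG /wfG[x [y [xy xV yV ->]]] vNe; exists x, y.
rewrite !in_setD1 xV yV; move: vNe.
by rewrite !inE !(eq_sym v) => /norP[-> ->].
Qed.

Lemma wf_del_vertex G v : wf_graph G -> wf_graph (del_vertex G v).
Proof.
by move=> wfG e; rewrite inE => /andP[eG vNe]; apply: wf_edge_avoiding.
Qed.

Lemma wf_contract G u v :
  wf_graph G -> adj G u v -> wf_graph (contract G u v).
Proof.
move=> wfG uv e /setUP[|/imsetP[w]].
  by rewrite inE => /andP[eG uNe]; apply: wf_edge_avoiding.
rewrite inE => /and3P[wV uw wv] ->; exists w, v.
have [uV vV uNv] := wf_adj wfG uv; have [_ _ uNw] := wf_adj wfG uw.
by rewrite !in_setD1 wv wV vV eq_sym uNw eq_sym uNv.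
Qed.

Definition nbhd G v : {set T} := [set w | adj G v w].

Lemma card_nbhd_le_deg G v : #|nbhd G v| <= deg G v.
Proof.
rewrite -(card_imset _ (@set2_inj v)); apply/subset_leq_card/subsetP => e.
by case/imsetP=> w; rewrite inE => vw ->; rewrite inE set21 andbT.
Qed.

Lemma card_edges_del_vertex G v : #|gE (del_vertex G v)| + deg G v = #|gE G|.
Proof.
rewrite addnC -(cardsID [set e : {set T} | v \in e] (gE G)).
by congr (_ + _); apply: eq_card => e; rewrite !inE // andbC.
Qed.

Lemma handshake G : wf_graph G -> \sum_(v in gV G) deg G v = 2 * #|gE G|.
Proof.
move=> wfG; rewrite mulnC -sum_nat_const.
under eq_bigr => v _ do rewrite /deg -sum1_card.
rewrite (exchange_big_dep (fun e => e \in gE G)) => [|v e _]; last first.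
  by rewrite inE => /andP[].
apply: eq_bigr => e eG; have [x [y [xy xV yV exy]]] := wfG e eG.
rewrite (eq_bigl (mem e)) => [|z]; first by rewrite sum1_card exy cards2 xy.
rewrite !inE eG /=; case/boolP: (z \in e) => [|_]; rewrite ?andbT ?andbF //.
by rewrite exy => /set2P[]->.
Qed.

Lemma mindeg3_card G : wf_graph G -> mindeg3 G -> 3 * #|gV G| <= 2 * #|gE G|.
Proof.
by move=> wfG deg3; rewrite -handshake // mulnC -sum_nat_const; apply: leq_sum.
Qed.

Definition edge_constant G (L : Type) (r : T -> L) : Prop :=
  forall x y, adj G x y -> r x = r y.

(* For every [r] constant on edges, #|r @: gV G| is at most the number c of
   connected components, with equality for the component labelling; so this
   says that the circuit rank |E| - |V| + c of [G] is at most [m]. *)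
Definition circuit_rank_le (m : nat) G : Prop :=
  forall (L : finType) (r : T -> L), edge_constant G r ->
    #|gE G| + #|r @: gV G| <= #|gV G| + m.

Lemma edge_constant_connect G (L : eqType) (r : T -> L) x y :
  edge_constant G r -> connect (adj G) x y -> r x = r y.
Proof.
move=> rG; have closed_r : closed (adj G) [pred z | r z == r x].
  by move=> a b /rG; rewrite !inE => ->.
by move/(closed_connect closed_r); rewrite !inE eqxx => /esym/eqP.
Qed.

Lemma connected_circuit_rank_le G m :
  connected_graph G -> #|gE G| + 1 = #|gV G| + m -> circuit_rank_le m G.
Proof.
move=> connG sizeG L r rG; have [V0|[x xV]] := set_0Vmem (gV G).
  by move: sizeG; rewrite V0 imset0 !cards0; lia.
suff : #|r @: gV G| <= 1 by lia.
rewrite -(cards1 (r x)); apply/subset_leq_card/subsetP => _ /imsetP[y yV ->].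
by rewrite inE (edge_constant_connect rG (connG y x yV xV)).
Qed.

Lemma circuit_rank_le_card G m :
  circuit_rank_le m G -> gV G != set0 -> #|gE G| < #|gV G| + m.
Proof.
move=> rankG /set0Pn[x xV]; have := rankG _ (fun=> tt) (fun _ _ _ => erefl).
suff -> : [set tt | _ in gV G] = [set tt] by rewrite cards1 addn1.
by apply/setP=> -[]; rewrite inE eqxx; apply/imsetP; exists x.
Qed.

Definition collapse (L : finType) (N : {set L}) (l : L) : option L :=
  if l \in N then None else Some l.

Lemma card_collapse (L : finType) (A N : {set L}) :
  #|A| + 1 <= #|None |: collapse N @: A| + #|N|.
Proof.
have : Some @: (A :\: N) \subset collapse N @: A.
  apply/subsetP => _ /imsetP[l /setDP[lA lNN] ->]; apply/imsetP; exists l => //.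
  by rewrite /collapse (negbTE lNN).
move/(setUS [set None])/subset_leq_card.
rewrite cardsU1 card_imset; last exact: Some_inj.
have -> : None \notin Some @: (A :\: N) by apply/imsetP=> -[].
rewrite add1n; have := cardsID N A; have := subset_leq_card (subsetIr A N); lia.
Qed.

Lemma circuit_rank_le_del_edge G m e : wf_graph G -> e \in gE G ->
  circuit_rank_le m G -> circuit_rank_le m (del_edge G e).
Proof.
move=> wfG eG rankG L r' r'G; have [x [y [xy xV yV exy]]] := wfG e eG.
pose N := r' @: e; pose r z := collapse N (r' z).
have rG : edge_constant G r.
  move=> a b ab; case: (eqVneq [set a; b] e) => [abe|abNe].
    by rewrite /r /collapse !imset_f // -abe ?set21 ?set22.
  by rewrite /r (r'G a b) // /adj /= !inE abNe.
have := card_collapse (r' @: gV G) N.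
have -> : None |: collapse N @: (r' @: gV G) = r @: gV G.
  rewrite -imset_comp; apply/setUidPr; rewrite sub1set.
  apply/imsetP; exists x => //.
  by rewrite /= /collapse imset_f // exy set21.
have : #|N| <= 2 by rewrite (leq_trans (leq_imset_card _ _)) // exy cards2 xy.
have : #|gE (del_edge G e)| + 1 = #|gE G| by rewrite [RHS](cardsD1 e) eG addnC.
have := rankG _ r rG.
change (gV (del_edge G e)) with (gV G); lia.
Qed.

Lemma circuit_rank_le_del_vertex G m v : v \in gV G ->
  circuit_rank_le m G -> circuit_rank_le m (del_vertex G v).
Proof.
move=> vV rankG L r' r'G.
pose N := r' @: nbhd G v.
pose r z := if z == v then None else collapse N (r' z).
have r_nbhd_v w : adj G v w -> r w = None.
  by move=> vw; rewrite /r /collapse imset_f ?inE //; case: ifP.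
have rG : edge_constant G r.
  move=> a b ab; case: (eqVneq a v) => [av|aNv].
    by subst a; rewrite (r_nbhd_v b ab) /r eqxx.
  case: (eqVneq b v) => [bv|bNv].
    by subst b; rewrite adj_sym in ab; rewrite (r_nbhd_v a ab) /r eqxx.
  rewrite /r (negbTE aNv) (negbTE bNv) (r'G a b) // /adj inE.
  apply/andP; split; first exact: ab.
  by rewrite !inE negb_or !(eq_sym v) aNv bNv.
have := card_collapse (r' @: gV (del_vertex G v)) N.
have : #|None |: collapse N @: (r' @: gV (del_vertex G v))| <= #|r @: gV G|.
  rewrite -imset_comp; apply/subset_leq_card/subsetP.
  move=> o /setU1P[->|/imsetP[z]].
    by apply/imsetP; exists v; rewrite // /r eqxx.
  rewrite /= in_setD1 => /andP[zNv zV] ->.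
  by apply/imsetP; exists z; rewrite // /r (negbTE zNv).
have : #|N| <= deg G v := leq_trans (leq_imset_card _ _) (card_nbhd_le_deg G v).
have := card_edges_del_vertex G v.
have : #|gV (del_vertex G v)| + 1 = #|gV G| by rewrite [RHS](cardsD1 v) vV addnC.
have := rankG _ r rG; lia.
Qed.

Lemma circuit_rank_le_contract G m u v : wf_graph G -> adj G u v ->
  circuit_rank_le m G -> circuit_rank_le m (contract G u v).
Proof.
move=> wfG uv rankG L r' r'G; have [uV vV uNv] := wf_adj wfG uv.
set W := [set w in gV G | adj G u w && (w != v)].
pose r z := if z == u then r' v else r' z.
have r_nbhd_u w : adj G u w -> r w = r u.
  move=> uw; have [_ wV uNw] := wf_adj wfG uw.
  rewrite /r eqxx eq_sym (negbTE uNw); case: (eqVneq w v) => [-> //|wNv].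
  by apply: r'G; apply/setUP; right; apply: imset_f; rewrite !inE wV uw wNv.
have rG : edge_constant G r.
  move=> a b ab; case: (eqVneq a u) => [au|aNu].
    by subst a; rewrite (r_nbhd_u b ab).
  case: (eqVneq b u) => [bu|bNu].
    by subst b; rewrite adj_sym in ab; rewrite (r_nbhd_u a ab).
  rewrite /r (negbTE aNu) (negbTE bNu); apply: r'G; apply/setUP; left.
  rewrite inE; apply/andP; split; first exact: ab.
  by rewrite !inE negb_or !(eq_sym u) aNu bNu.
have : #|gE (contract G u v)| <= #|gE (del_vertex G u)| + #|W|.
  apply: leq_trans (leq_card_setU _ _).1 _.
  exact: leq_add (leqnn _) (leq_imset_card _ _).
have : #|W| < deg G u.
  apply: leq_trans (card_nbhd_le_deg G u).
  have card_vW : #|v |: W| = #|W|.+1 by rewrite cardsU1 !inE eqxx !andbF.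
  rewrite -card_vW; apply/subset_leq_card/subsetP => w.
  by case/setU1P=> [->|]; rewrite !inE // => /and3P[].
have : #|r' @: gV (contract G u v)| <= #|r @: gV G|.
  apply/subset_leq_card/subsetP => l /imsetP[z].
  rewrite /= in_setD1 => /andP[zNu zV] ->.
  by apply/imsetP; exists z; rewrite // /r (negbTE zNu).
have := card_edges_del_vertex G u.
have : #|gV (contract G u v)| + 1 = #|gV G| by rewrite [RHS](cardsD1 u) uV addnC.
have := rankG _ r rG; lia.
Qed.

Lemma minor_circuit_rank_le G H m : minor G H -> wf_graph G ->
  circuit_rank_le m G -> wf_graph H /\ circuit_rank_le m H.
Proof.
move=> GH wfG rankG; elim: GH => [|K e _ [wfK rankK] eK|K v _ [wfK rankK] vK
  |K u v _ [wfK rankK] _ uv]; split => //.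
- exact: wf_del_edge.
- exact: circuit_rank_le_del_edge.
- exact: wf_del_vertex.
- exact: circuit_rank_le_del_vertex.
- exact: wf_contract.
- exact: circuit_rank_le_contract.
Qed.

Lemma minor_mindeg3_card G H m : wf_graph G -> connected_graph G ->
  #|gE G| + 1 = #|gV G| + m -> minor G H -> mindeg3 H ->
  #|gV H| <= 2 * (m - 1).
Proof.
move=> wfG connG sizeG GH deg3.
have [wfH rankH] :=
  minor_circuit_rank_le GH wfG (connected_circuit_rank_le connG sizeG).
have [->|VH] := eqVneq (gV H) set0; first by rewrite cards0.
have := circuit_rank_le_card rankH VH; have := mindeg3_card wfH deg3; lia.
Qed.

End Graphs.

Theorem lemma24 (T : finType) (G : graph T) (m : nat) :
  1 <= m -> wf_graph G -> connected_graph G ->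
  #|gE G| + 1 = #|gV G| + m ->
  forall H : graph T, minor3core G H -> #|gV H| <= 2 * (m - 1).
Proof.
move=> _ wfG connG sizeG H [GH deg3 _].
exact: minor_mindeg3_card wfG connG sizeG GH deg3.
Qed.
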